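(* Let $\mathcal{H}$ be a complex linear space equipped with an indefinite inner product $[\cdot,\cdot]$, and let $\mathcal{F}_{++}=\{f\in\mathcal{H} : [f,f]>0\}$. Then every $f\in\mathcal{H}$ can be written as $f=g_1+g_2$ with $g_1,g_2\in\mathcal{F}_{++}$, i.e. $\mathcal{H}=\mathcal{F}_{++}+\mathcal{F}_{++}$. Moreover, every linear operator $W$ defined on $\mathcal{F}_{++}$ can be uniquely extended to a linear operator acting on the whole space $\mathcal{H}$.
   Context: An indefinite inner product on a complex linear space $\mathcal{H}$ is a Hermitian sesquilinear form $[\cdot,\cdot]:\mathcal{H}\times\mathcal{H}\to\mathbb{C}$ (linear in the second argument, $[f,g]=\overline{[g,f]}$) such that there exist $f$ with $[f,f]>0$ and $g$ with $[g,g]<0$. Throughout, $\mathcal{H}$ is assumed non-degenerate: $[f,g]=0$ for all $g\in\mathcal{H}$ implies $f=0$. An operator $W:\mathcal{F}_{++}\to\mathcal{H}$ is called linear (on $\mathcal{F}_{++}$) if $W(cf)=cWf$ for all $f\in\mathcal{F}_{++}$ and nonzero $c\in\mathbb{C}$, and $W(f+g)=Wf+Wg$ whenever $f,g\in\mathcal{F}_{++}$ and $f+g\in\mathcal{F}_{++}$. *)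

From HB Require Import structures.
From mathcomp Require Import all_boot all_order all_algebra.
From mathcomp Require Import complex.
From mathcomp Require Import reals.
Set Implicit Arguments. Unset Strict Implicit. Unset Printing Implicit Defensive.
Import Order.TTheory GRing.Theory Num.Theory.
Local Open Scope ring_scope.

Definition hermitian_sesquilinear (C : numClosedFieldType) (V : lmodType C)
  (form : V -> V -> C) : Prop :=
  (forall (a : C) (f g h : V), form f (a *: g + h) = a * form f g + form f h) /\
  (forall f g : V, form f g = (form g f)^*).

Definition indefinite_inner_product (C : numClosedFieldType) (V : lmodType C)
  (form : V -> V -> C) : Prop :=
  hermitian_sesquilinear form /\
  (exists f : V, 0 < form f f) /\ (exists g : V, form g g < 0).

Definition ip_nondegenerate (C : numClosedFieldType) (V : lmodType C)
  (form : V -> V -> C) : Prop :=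
  forall f : V, (forall g : V, form f g = 0) -> f = 0.

Definition Fpp (C : numClosedFieldType) (V : lmodType C)
  (form : V -> V -> C) (f : V) : Prop := 0 < form f f.

(* W is linear on F_{++} (only values of W on F_{++} matter). *)
Definition linear_on_Fpp (C : numClosedFieldType) (V : lmodType C)
  (form : V -> V -> C) (W : V -> V) : Prop :=
  (forall (c : C) (f : V), Fpp form f -> c != 0 -> W (c *: f) = c *: W f) /\
  (forall f g : V, Fpp form f -> Fpp form g -> Fpp form (f + g) ->
     W (f + g) = W f + W g).

Definition linear_op (C : numClosedFieldType) (V : lmodType C) (W : V -> V) : Prop :=
  forall (a : C) (f g : V), W (a *: f + g) = a *: W f + W g.

From HB Require Import structures.
From mathcomp Require Import all_boot all_order all_algebra.
From mathcomp Require Import complex.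
From mathcomp Require Import reals.
Import Order.TTheory GRing.Theory Num.Theory.
Local Open Scope ring_scope.

(* Fix p with [p, p] > 0.  Expanding
     [f + c p, f + c p] = [f, f] + 2 Re (c [f, p]) + |c|^2 [p, p]
   shows that f + c p is positive as soon as |c| is large, so
   f = (f + c p) + (- c p) is a sum of two positive vectors.  Any linear
   extension of W must then be f |-> W (f + c p) - c W p.  This value does not
   depend on the admissible c: both f + c p and f + d p can be completed to the
   same positive vector f + e p by adding a positive multiple of p, and W is
   additive on such sums.  Linearity follows by choosing c large enough for all
   the vectors involved at once. *)

Section HermitianForm.
Set Implicit Arguments. Unset Strict Implicit.

Context {C : numClosedFieldType} {V : lmodType C} (form : V -> V -> C).
Hypothesis formDZr :
  forall (a : C) (f g h : V), form f (a *: g + h) = a * form f g + form f h.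
Hypothesis form_herm : forall f g : V, form f g = (form g f)^*.

Lemma form0r f : form f 0 = 0.
Proof.
have := formDZr 1 f 0 0; rewrite scaler0 add0r mul1r => h.
by apply: (addIr (form f 0)); rewrite add0r -h.
Qed.

Lemma formDr f g h : form f (g + h) = form f g + form f h.
Proof. by rewrite -[g]scale1r formDZr mul1r scale1r. Qed.

Lemma formZr f a g : form f (a *: g) = a * form f g.
Proof. by rewrite -[a *: g]addr0 formDZr form0r addr0. Qed.

Lemma formDl f g h : form (g + h) f = form g f + form h f.
Proof. by rewrite [LHS]form_herm (form_herm g) (form_herm h) formDr rmorphD. Qed.

Lemma formZl f a g : form (a *: g) f = a^* * form g f.
Proof. by rewrite [LHS]form_herm (form_herm g) formZr rmorphM. Qed.

Lemma form_self_real f : form f f \is Num.real.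
Proof. by apply/CrealP; rewrite -form_herm. Qed.

Lemma FppZ a f : Fpp form f -> a != 0 -> Fpp form (a *: f).
Proof.
rewrite /Fpp formZl formZr mulrA [a^* * a]mulrC -normCK => f_pos a_neq0.
by rewrite pmulr_rgt0 // exprn_gt0 // normr_gt0.
Qed.

Lemma form_shift_self f p c :
  form (f + c *: p) (f + c *: p) =
  form f f + (c * form f p + (c * form f p)^*) + `|c| ^+ 2 * form p p.
Proof.
rewrite formDl !formDr !formZl !formZr [form p f]form_herm -rmorphM.
by rewrite mulrA [_^* * c]mulrC -normCK !addrA.
Qed.

Variable p : V.
Hypothesis Fpp_p : Fpp form p.

Definition shift_bound f := (`|form f f| + 2 * `|form f p|) / form p p + 1.

Lemma shift_bound_ge1 f : 1 <= shift_bound f.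
Proof. by rewrite lerDr divr_ge0 ?addr_ge0 ?mulr_ge0 // ltW. Qed.

Lemma shift_bound_gt0 f : 0 < shift_bound f.
Proof. exact: lt_le_trans ltr01 (shift_bound_ge1 f). Qed.

Lemma shift_bound_ge0 f : 0 <= shift_bound f.
Proof. exact: ltW (shift_bound_gt0 f). Qed.

#[local] Hint Resolve shift_bound_gt0 shift_bound_ge0 : core.

Lemma Fpp_shift f c : shift_bound f <= `|c| -> Fpp form (f + c *: p).
Proof.
rewrite /Fpp form_shift_self.
set A := form f f; set B := form f p; set P := form p p; set n := `|c|.
move=> c_big.
have n_ge1 : 1 <= n := le_trans (shift_bound_ge1 f) c_big.
have n_ge0 : 0 <= n := normr_ge0 c.
have A_ge : - `|A| <= A by apply: real_lerNnormlW; rewrite ?form_self_real.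
have cross_ge : - (2 * n * `|B|) <= c * B + (c * B)^*.
  apply: real_lerNnormlW; first by apply/CrealP; rewrite rmorphD /= conjCK addrC.
  apply: le_trans (ler_normD _ _) _.
  by rewrite -mulrA mulr_natl mulr2n norm_conjC normrM.
have nP_ge : `|A| + 2 * `|B| + P <= n * P.
  by rewrite -lerBrDr -[X in _ - X]mul1r -mulrBl -ler_pdivrMr // lerBrDr.
have quadratic_wins : `|A| + 2 * n * `|B| < n ^+ 2 * P.
  apply: lt_le_trans (_ : n * (`|A| + 2 * `|B| + P) <= _); last first.
    by rewrite expr2 -mulrA ler_wpM2l.
  rewrite !mulrDr -addrA [2 * n]mulrC -mulrA ler_ltD ?ler_peMl //.
  by rewrite ltrDl pmulr_rgt0 // (lt_le_trans ltr01).
apply: lt_le_trans (lerD (lerD A_ge cross_ge) (lexx _)).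
by rewrite -opprD addrC subr_gt0.
Qed.

Lemma Fpp_decomposition f :
  exists g1 g2, Fpp form g1 /\ Fpp form g2 /\ f = g1 + g2.
Proof.
exists (f + shift_bound f *: p), ((- shift_bound f) *: p); split; last split.
- by apply: Fpp_shift; rewrite gtr0_norm.
- by apply: FppZ; rewrite // oppr_eq0 gt_eqF.
- by rewrite scaleNr addrK.
Qed.

Variable W : V -> V.
Hypothesis WZ : forall c f, Fpp form f -> c != 0 -> W (c *: f) = c *: W f.
Hypothesis WD : forall f g, Fpp form f -> Fpp form g -> Fpp form (f + g) ->
  W (f + g) = W f + W g.

Lemma W_shift f c e : shift_bound f <= `|c| -> shift_bound f <= `|e| -> c != e ->
  W (f + e *: p) - e *: W p = W (f + c *: p) - c *: W p.
Proof.
move=> c_big e_big c_neq_e.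
have ec_neq0 : e - c != 0 by rewrite subr_eq0 eq_sym.
have split_e : f + e *: p = (f + c *: p) + (e - c) *: p.
  by rewrite -addrA -scalerDl addrCA subrr addr0.
rewrite split_e WD ?WZ //; first by rewrite scalerBl addrAC addrA subrK.
- exact: Fpp_shift.
- exact: FppZ.
- by rewrite -split_e; apply: Fpp_shift.
Qed.

Lemma W_shift_indep f c d : shift_bound f <= `|c| -> shift_bound f <= `|d| ->
  W (f + c *: p) - c *: W p = W (f + d *: p) - d *: W p.
Proof.
move=> c_big d_big; set e := shift_bound f + `|c| + `|d|.
have e_ge0 : 0 <= e by rewrite /e 2?addr_ge0.
have e_big : shift_bound f <= `|e| by rewrite ger0_norm // /e -addrA lerDl addr_ge0.
have neq_e x : `|x| < e -> x != e.
  by move=> x_lt; apply: contraTneq x_lt => ->; rewrite ger0_norm ?ltxx.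
rewrite -(W_shift c_big e_big) ?(W_shift d_big e_big) // neq_e //.
- by rewrite /e ltrDr ltr_wpDr.
- by rewrite /e addrAC ltrDr ltr_wpDr.
Qed.

Definition lin_ext f := W (f + shift_bound f *: p) - shift_bound f *: W p.

Lemma lin_extE f c : shift_bound f <= `|c| -> lin_ext f = W (f + c *: p) - c *: W p.
Proof.
by move=> c_big; apply: W_shift_indep; rewrite // gtr0_norm.
Qed.

Lemma lin_ext_Fpp f : Fpp form f -> lin_ext f = W f.
Proof.
have T_neq0 : shift_bound f != 0 by rewrite gt_eqF.
move=> f_pos; rewrite /lin_ext WD ?WZ ?addrK //; first exact: FppZ.
by apply: Fpp_shift; rewrite gtr0_norm.
Qed.

Lemma lin_ext0 : lin_ext 0 = 0.
Proof. by rewrite /lin_ext add0r WZ ?subrr // gt_eqF. Qed.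

Lemma lin_extD f g : lin_ext (f + g) = lin_ext f + lin_ext g.
Proof.
have [c [c_ge0 f_le g_le fg_le]] : exists c, [/\ 0 <= c, shift_bound f <= c,
    shift_bound g <= c & shift_bound (f + g) <= c].
  exists (shift_bound f + shift_bound g + shift_bound (f + g)).
  split; first by rewrite addr_ge0 // addr_ge0.
  - by rewrite -addrA lerDl addr_ge0.
  - by rewrite addrAC lerDr addr_ge0.
  - by rewrite lerDr addr_ge0.
have c_le : c <= `|c| by rewrite ger0_norm.
have cc_le : c <= `|c + c| by rewrite ger0_norm ?addr_ge0 // lerDl.
have split_fg : f + g + (c + c) *: p = (f + c *: p) + (g + c *: p).
  by rewrite scalerDl addrACA.
rewrite (lin_extE (le_trans f_le c_le)) (lin_extE (le_trans g_le c_le)).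
rewrite (lin_extE (le_trans fg_le cc_le)) split_fg.
rewrite WD; first by rewrite scalerDl opprD addrACA.
- exact/Fpp_shift/(le_trans f_le c_le).
- exact/Fpp_shift/(le_trans g_le c_le).
- by rewrite -split_fg; apply/Fpp_shift/(le_trans fg_le cc_le).
Qed.

Lemma lin_extZ a f : lin_ext (a *: f) = a *: lin_ext f.
Proof.
have [->|a_neq0] := eqVneq a 0; first by rewrite !scale0r lin_ext0.
have [d [d_ge0 f_le af_le]] : exists d, [/\ 0 <= d, shift_bound f <= d &
    shift_bound (a *: f) <= `|a| * d].
  exists (shift_bound f + shift_bound (a *: f) / `|a|).
  split; first by rewrite addr_ge0 ?divr_ge0.
  - by rewrite lerDl divr_ge0.
  - by rewrite mulrDr [X in _ + X]mulrCA mulfV ?normr_eq0 // mulr1 lerDr mulr_ge0.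
have f_le' : shift_bound f <= `|d| by rewrite ger0_norm.
have af_le' : shift_bound (a *: f) <= `|a * d| by rewrite normrM (ger0_norm d_ge0).
rewrite (lin_extE af_le') (lin_extE f_le') -scalerA -scalerDr.
by rewrite WZ ?scalerBr ?scalerA //; apply: Fpp_shift.
Qed.

Lemma lin_ext_linear : linear_op lin_ext.
Proof. by move=> a f g; rewrite lin_extD lin_extZ. Qed.

Lemma lin_ext_unique W' : linear_op W' -> (forall f, Fpp form f -> W' f = W f) ->
  forall f, W' f = lin_ext f.
Proof.
move=> W'_lin W'_eq f.
rewrite /lin_ext -!W'_eq //; last by apply: Fpp_shift; rewrite gtr0_norm.
by rewrite [f + _]addrC W'_lin addrAC subrr add0r.
Qed.

End HermitianForm.

Theorem lemma2p2 (R : realType) (V : lmodType R[i]) (form : V -> V -> R[i])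
  (Hind : indefinite_inner_product form) (Hnd : ip_nondegenerate form) :
  (forall f : V, exists g1 g2 : V, Fpp form g1 /\ Fpp form g2 /\ f = g1 + g2) /\
  (forall W : V -> V, linear_on_Fpp form W ->
     exists W' : V -> V,
       [/\ linear_op W',
           (forall f : V, Fpp form f -> W' f = W f) &
           (forall W'' : V -> V, linear_op W'' ->
              (forall f : V, Fpp form f -> W'' f = W f) ->
              forall f : V, W'' f = W' f)]).
Proof.
case: Hind => [[formDZr form_herm] [[p Fpp_p] _]].
split; first exact (Fpp_decomposition formDZr form_herm Fpp_p).
move=> W [WZ WD]; exists (lin_ext form p W); split.
- exact (lin_ext_linear formDZr form_herm Fpp_p WZ WD).
- exact (lin_ext_Fpp formDZr form_herm Fpp_p WZ WD).
- exact (lin_ext_unique formDZr form_herm Fpp_p (W:=W)).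
Qed.
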